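(* Let $\widehat M$ be a cooperative Markov game with MMDP $M$ and $(S_{target},S_{avoid})$ a reach-avoid objective, and let $v^*=\sup_{\pi_{act}}\mathbb P_{M_{\pi_{act}}}((\neg S_{avoid})\mathcal U S_{target})$. Let $(x^*_{s,a},x^*_{o,c})$ be an optimal solution of the optimization problem (OPT) below, and define $\pi^*_{comm}(o)(c)=x^*_{o,c}/\sum_{d\in\mathcal A_{comm}}x^*_{o,d}$ and $\pi^*_{act}(s)(a)=x^*_{s,a}/\sum_{b\in\mathcal A}x^*_{s,b}$ (arbitrary distributions where the denominator is $0$). Then $\mathbb P_{M_{\pi^*_{act}}}((\neg S_{avoid})\mathcal U S_{target})=v^*$, and for every pair $(\pi'_{comm},\pi'_{act})\in\Pi^{pos}_{comm}(\mathcal O,K)\times\Pi^{pos}_{act}(M)$ with $\mathbb P_{M_{\pi'_{act}}}((\neg S_{avoid})\mathcal U S_{target})=v^*$ (and finite occupancy measures) we have $\bar D_{(\pi^*_{comm},\pi^*_{act})}\le\bar D_{(\pi'_{comm},\pi'_{act})}$. (OPT): variables $x_{s,a}\ge0$ for $s\in\mathcal S\setminus\mathcal T$, $a\in\mathcal A$, and $x_{o,c}\ge0$ for $o\in\mathcal O$, $c\in\mathcal A_{comm}$; minimize $\bar d=\Phi(x)$ subject to (i) flow: $\sum_{a}x_{s,a}=\sum_{s'\notin\mathcal T,\,b\in\mathcal A}x_{s',b}P(s',b)(s)+\mathbb 1[s=s_{init}]$ for all $s\in\mathcal S\setminus\mathcal T$; (ii) reach-avoid: $v^*\le\sum_{s\notin\mathcal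 T,\,a\in\mathcal A,\,s'\in S_{target}}x_{s,a}P(s,a)(s')$; (iii) consistency: $\sum_{l\in\mathcal L:(o,l)\notin\mathcal T,\,a\in\mathcal A}x_{(o,l),a}=\sum_{c\in\mathcal A_{comm}}x_{o,c}$ for all $o\in\mathcal O$.
   Context: MMDP: there are $N\ge1$ agents, identified with $[N]=\{1,\dots,N\}$. Agent $i$ has a finite local state set $\mathcal S^i$, finite local action set $\mathcal A^i$, local transition function $P^i:\mathcal S^i\times\mathcal A^i\to\Delta(\mathcal S^i)$ and initial local state $s^i_{init}$. Joint states $\mathcal S=\prod_i\mathcal S^i$, joint actions $\mathcal A=\prod_i\mathcal A^i$, joint transitions $P(s,a)(u)=\prod_{i}P^i(s^i,a^i)(u^i)$, initial state $s_{init}$. Positional joint action policies $\pi_{act}:\mathcal S\to\Delta(\mathcal A)$ form $\Pi^{pos}_{act}(M)$. Cooperative Markov game $\widehat M=(M,\mathcal O^1,\dots,\mathcal O^N,\mathcal L^1,\dots,\mathcal L^N,K)$: each $\mathcal S^i=\mathcal O^i\times\mathcal L^i$; $\mathcal O=\prod_i\mathcal O^i$, $\mathcal L=\prod_i\mathcal L^i$, joint state $s=(o,l)$. For $c\subseteq[N]$, $\mathcal L^c,\mathcal A^c$ are the products over $j\in c$, $o^c,l^c,a^c$ restrictions, $P^c((o^c,l^c),a^c)((o^c_1,l^c_1))=\prod_{j\in c}P^j((o^j,l^j),a^j)((o^j_1,l^j_1))$. $K\in\{0,\dots,N\}$; $\mathcal A_{comm}$ is the set of subsets of $[N]$ of size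 $K$. Positional communication policies $\pi_{comm}:\mathcal O\to\Delta(\mathcal A_{comm})$ form $\Pi^{pos}_{comm}(\mathcal O,K)$. Reach-avoid objective: disjoint $S_{target},S_{avoid}\subseteq\mathcal S$, $\mathcal T=S_{target}\cup S_{avoid}$; the process $S_0=s_{init},A_1,S_1,\dots$ of $M$ under $\pi_{act}$ (with $\mathbb P(A_t=a,S_t=s'\mid\dots,S_{t-1}=s)=\pi_{act}(s)(a)P(s,a)(s')$) is stopped upon entering $\mathcal T$; $\mathbb P_{M_{\pi_{act}}}((\neg S_{avoid})\mathcal U S_{target})$ is the probability of reaching $S_{target}$ without previously visiting $S_{avoid}$. Occupancy measures: $\nu_{s,a}=\sum_{t\ge1}\mathbb P(S_{t-1}=s,A_t=a,\ S_0,\dots,S_{t-1}\notin\mathcal T)$ for $s\notin\mathcal T$. The function $\Phi$: for nonnegative numbers $y_{s,a}$ ($s\notin\mathcal T$) and weights $W'(o,i)$, $W''(o,c)$, with marginals $y_{o,l^c,a^c}=\sum y_{(o,l),a}$ over $l$ with restriction $l^c$, $(o,l)\notin\mathcal T$, and $a$ with restriction $a^c$ ($y_{o,l^i,a^i}$ for $c=\{i\}$), put $h=-\sum_{s\notin\mathcal T,a}y_{s,a}\log\frac{y_{s,a}}{\sum_by_{s,b}}-\sum_{s\notin\mathcal T,a,s'}y_{s,a}P(s,a)(s')\log P(s,a)(s')$, $g^i=-\sum_{o,l^i,a^i}y_{o,l^i,a^i}W'(o,i)\log\frac{y_{o,l^i,a^i}}{\sum_{b^i}y_{o,l^i,b^i}}-\sum_{o,l^i,a^i,o^i_1,l^i_1}y_{o,l^i,a^i}W'(o,i)P^i((o^i,l^i),a^i)((o^i_1,l^i_1))\log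 P^i((o^i,l^i),a^i)((o^i_1,l^i_1))$, $g^c$ analogously with $c$ in place of $i$, $W''(o,c)$ and $P^c$; and value $-h+\sum_{i\in[N]}g^i+\sum_{c\in\mathcal A_{comm}}g^c$. In (OPT), $\Phi(x)$ is this value with $y=x$, $W'(o,i)=\sum_{c\in\mathcal A_{comm},i\notin c}x_{o,c}/\sum_{c'}x_{o,c'}$ and $W''(o,c)=x_{o,c}/\sum_{c'}x_{o,c'}$. For a policy pair, $\bar D_{(\pi_{comm},\pi_{act})}$ is this value with $y=\nu$ (occupancy measures of $\pi_{act}$), $W'(o,i)=\sum_{c\in\mathcal A_{comm},i\notin c}\pi_{comm}(o)(c)$ and $W''(o,c)=\pi_{comm}(o)(c)$. Conventions: $0\log0=0$; summands with zero occupancy are $0$. *)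

From HB Require Import structures.
From mathcomp Require Import all_boot all_order all_algebra.
From mathcomp Require Import all_classical all_reals all_analysis.
Set Implicit Arguments.
Unset Strict Implicit.
Unset Printing Implicit Defensive.
Import Order.TTheory GRing.Theory Num.Theory.
Local Open Scope ring_scope.

(* Cooperative Markov game: N agents ('I_N), agent i has local state set     *)
(* S^i = O^i x L^i, local actions A^i, local transition P^i, initial local  *)
(* state (o^i_init, l^i_init); K is the communication budget, K <= N.        *)
Record coop_game (R : realType) := CoopGame {
  nag : nat;
  obs : 'I_nag -> finType;
  loc : 'I_nag -> finType;
  act : 'I_nag -> finType;
  trans : forall i, (obs i * loc i)%type -> act i -> (obs i * loc i)%type -> R;
  init_obs : forall i, obs i;
  init_loc : forall i, loc i;
  ncomm : nat;
  trans_ge0 : forall (i : 'I_nag) s a s', 0 <= trans (i:=i) s a s';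
  trans_sum1 : forall (i : 'I_nag) s a, \sum_(s' : (obs i * loc i)%type) trans (i:=i) s a s' = 1;
  ncomm_le : (ncomm <= nag)%N
}.
Arguments nag {R} c.
Arguments obs {R} c i.
Arguments loc {R} c i.
Arguments act {R} c i.
Arguments trans {R} c i s a s'.
Arguments init_obs {R} c i.
Arguments init_loc {R} c i.
Arguments ncomm {R} c.

Notation Oj G := {dffun forall i : 'I_(nag G), obs G i}.
Notation Lj G := {dffun forall i : 'I_(nag G), loc G i}.
Notation Sj G := (Oj G * Lj G)%type.
Notation Aj G := {dffun forall i : 'I_(nag G), act G i}.
Notation Acomm G := {c : {set 'I_(nag G)} | #|c| == ncomm G}.

Section Game.
Variables (R : realType) (G : coop_game R).

Definition s_init : Sj G :=
  ([ffun i => init_obs G i], [ffun i => init_loc G i]).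

Definition jtrans (s : Sj G) (a : Aj G) (s' : Sj G) : R :=
  \prod_(i < nag G) trans G i (s.1 i, s.2 i) (a i) (s'.1 i, s'.2 i).

Definition is_act_policy (pi : Sj G -> Aj G -> R) : Prop :=
  forall s, (forall a, 0 <= pi s a) /\ \sum_a pi s a = 1.

Definition is_comm_policy (pc : Oj G -> Acomm G -> R) : Prop :=
  forall o, (forall c, 0 <= pc o c) /\ \sum_c pc o c = 1.

Variable (T : {set Sj G}). (* T = S_target :|: S_avoid, the stopping set *)

(* alive t s = P(S_t = s, S_0, ..., S_{t-1} \notin T) in the process stopped
   on entering T, under policy pi. *)
Fixpoint alive (pi : Sj G -> Aj G -> R) (t : nat) (s' : Sj G) : R :=
  match t with
  | 0 => (s' == s_init)%:R
  | t.+1 => \sum_(s : Sj G | s \notin T) \sum_(a : Aj G)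
              alive pi t s * pi s a * jtrans s a s'
  end.

(* occupancy measure nu_{s,a} = sum_{t>=1} P(S_{t-1}=s, A_t=a, S_0..S_{t-1} \notin T)
   (for s \notin T); an extended real, possibly +oo. *)
Definition occ (pi : Sj G -> Aj G -> R) (s : Sj G) (a : Aj G) : \bar R :=
  (\sum_(t <oo) ((alive pi t s * pi s a)%:E))%E.

(* P((not S_avoid) U S_target): probability that the first entrance into T
   happens at a state of S_target (= sum over t of P(S_t in S_target,
   S_0..S_{t-1} \notin T)). *)
Definition reach_prob (Starget : {set Sj G}) (pi : Sj G -> Aj G -> R) : \bar R :=
  (\sum_(t <oo) ((\sum_(s in Starget) alive pi t s)%:E))%E.

Definition vstar (Starget : {set Sj G}) : \bar R :=
  ereal_sup [set reach_prob Starget pi | pi in is_act_policy].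

(* An element of prod_{j in c} X_j is encoded as a partial assignment
   x : forall i, option (X i) whose support is exactly c. *)
Definition supp_on (X : 'I_(nag G) -> finType) (c : {set 'I_(nag G)})
  (x : {dffun forall i : 'I_(nag G), option (X i)}) : bool :=
  [forall i, (x i != None) == (i \in c)].

Definition restr (X : 'I_(nag G) -> finType) (c : {set 'I_(nag G)})
  (x : {dffun forall i : 'I_(nag G), X i}) : {dffun forall i : 'I_(nag G), option (X i)} :=
  [ffun i => if i \in c then Some (x i) else None].

Notation Lc := {dffun forall i : 'I_(nag G), option (loc G i)}.
Notation Ac := {dffun forall i : 'I_(nag G), option (act G i)}.
Notation Oc := {dffun forall i : 'I_(nag G), option (obs G i)}.

Definition ctrans (c : {set 'I_(nag G)}) (o : Oj G) (lc : Lc) (ac : Ac)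
  (o1c : Oc) (l1c : Lc) : R :=
  \prod_(j in c)
     match lc j, ac j, o1c j, l1c j with
     | Some lj, Some aj, Some o1j, Some l1j => trans G j (o j, lj) aj (o1j, l1j)
     | _, _, _, _ => 0
     end.

Definition xlog (x y : R) : R := if x == 0 then 0 else x * ln y.

Definition marg (y : Sj G -> Aj G -> R) (c : {set 'I_(nag G)}) (o : Oj G)
  (lc : Lc) (ac : Ac) : R :=
  \sum_(l : Lj G | ((o, l) \notin T) && (restr c l == lc))
    \sum_(a : Aj G | restr c a == ac) y (o, l) a.

Definition hterm (y : Sj G -> Aj G -> R) : R :=
  - (\sum_(s : Sj G | s \notin T) \sum_(a : Aj G)
        xlog (y s a) (y s a / \sum_(b : Aj G) y s b))
  - (\sum_(s : Sj G | s \notin T) \sum_(a : Aj G) \sum_(s' : Sj G)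
        xlog (y s a * jtrans s a s') (jtrans s a s')).

Definition gterm (y : Sj G -> Aj G -> R) (c : {set 'I_(nag G)}) (W : Oj G -> R) : R :=
  - (\sum_(o : Oj G) \sum_(lc : Lc | supp_on c lc) \sum_(ac : Ac | supp_on c ac)
        xlog (marg y c o lc ac * W o)
             (marg y c o lc ac / \sum_(bc : Ac | supp_on c bc) marg y c o lc bc))
  - (\sum_(o : Oj G) \sum_(lc : Lc | supp_on c lc) \sum_(ac : Ac | supp_on c ac)
     \sum_(o1c : Oc | supp_on c o1c) \sum_(l1c : Lc | supp_on c l1c)
        xlog (marg y c o lc ac * W o * ctrans c o lc ac o1c l1c)
             (ctrans c o lc ac o1c l1c)).

Definition Phi_val (y : Sj G -> Aj G -> R) (W1 : Oj G -> 'I_(nag G) -> R)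
  (W2 : Oj G -> Acomm G -> R) : R :=
  - hterm y + \sum_(i < nag G) gterm y [set i] (fun o => W1 o i)
            + \sum_(c : Acomm G) gterm y (val c) (fun o => W2 o c).

Definition Phi (x1 : Sj G -> Aj G -> R) (x2 : Oj G -> Acomm G -> R) : R :=
  Phi_val x1
    (fun o i => (\sum_(c : Acomm G | i \notin val c) x2 o c) / \sum_(c' : Acomm G) x2 o c')
    (fun o c => x2 o c / \sum_(c' : Acomm G) x2 o c').

Definition Dbar (pc : Oj G -> Acomm G -> R) (pa : Sj G -> Aj G -> R) : R :=
  Phi_val (fun s a => fine (occ pa s a))
    (fun o i => \sum_(c : Acomm G | i \notin val c) pc o c)
    (fun o c => pc o c).

Definition opt_feasible (Starget : {set Sj G})
  (x1 : Sj G -> Aj G -> R) (x2 : Oj G -> Acomm G -> R) : Prop :=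
  [/\ (forall s a, s \notin T -> 0 <= x1 s a),
      (forall o c, 0 <= x2 o c),
      (forall s, s \notin T ->
         \sum_(a : Aj G) x1 s a =
         \sum_(s' : Sj G | s' \notin T) \sum_(b : Aj G) x1 s' b * jtrans s' b s
         + (s == s_init)%:R),
      (vstar Starget <= (\sum_(s : Sj G | s \notin T) \sum_(a : Aj G)
          \sum_(s' in Starget) x1 s a * jtrans s a s')%:E)%E &
      (forall o : Oj G,
         \sum_(l : Lj G | (o, l) \notin T) \sum_(a : Aj G) x1 (o, l) a =
         \sum_(c : Acomm G) x2 o c)].

Definition opt_optimal (Starget : {set Sj G})
  (x1 : Sj G -> Aj G -> R) (x2 : Oj G -> Acomm G -> R) : Prop :=
  opt_feasible Starget x1 x2 /\
  forall y1 y2, opt_feasible Starget y1 y2 -> Phi x1 x2 <= Phi y1 y2.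

End Game.

From HB Require Import structures.
From mathcomp Require Import all_boot all_order all_algebra.
From mathcomp Require Import all_classical all_reals all_analysis.
From mathcomp Require Import ring lra.
Set Implicit Arguments.
Unset Strict Implicit.
Unset Printing Implicit Defensive.
Import Order.TTheory GRing.Theory Num.Theory.
Local Open Scope ring_scope.

(* Let nu be the expected number of visits of the stopped chain, so that the
   occupancy measure of an action policy pi is nu(s) pi(s)(a), and let
   X(s) = sum_a x*_{s,a}.  Then X solves the flow equation (i) for pi*_act, of
   which nu is the least nonnegative solution: nu <= X and nu is finite.  Every
   flow is absorbed into T with the same total mass, so the surplus X - nu is
   never absorbed, and X and nu send the same flow into S_target; with (ii)
   this shows that pi*_act reaches S_target with probability v*.
   For the entropy bound, the occupancy measure of any pair reaching with
   probability v* is feasible for (OPT), so its Dbar is at least the optimum.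
   Conversely 2X - nu is again a feasible flow of pi*_act and x* is the
   midpoint of nu pi*_act and (2X - nu) pi*_act.  Along this segment h is
   affine and every g-term is concave (log-sum inequality), so the optimality
   of x* bounds the Dbar of (pi*_comm, pi*_act) by the optimum. *)

Section XLog.
Variable R : realType.
Implicit Types p q P Q k r : R.

Lemma xlog0 r : xlog 0 r = 0.
Proof. by rewrite /xlog eqxx. Qed.

Lemma xlogE p r : p != 0 -> xlog p r = p * ln r.
Proof. by rewrite /xlog => /negbTE ->. Qed.

Lemma xlogM k p r : xlog (k * p) r = k * xlog p r.
Proof.
have [->|k0] := eqVneq k 0; first by rewrite !mul0r xlog0.
have [->|p0] := eqVneq p 0; first by rewrite mulr0 xlog0 mulr0.
by rewrite !xlogE ?mulf_neq0 // mulrA.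
Qed.

Lemma ln_le_subr1 r : 0 < r -> ln r <= r - 1.
Proof. by move=> r0; have := @le_ln1Dx R (r - 1); rewrite addrCA subrr addr0; apply; lra. Qed.

(* The log-sum inequality for two terms; Gibbs' [ln u <= u - 1] is applied at
   [u = r P / p] and [u = r Q / q], where [r] is the merged ratio. *)
Lemma log_sum_le p q P Q : 0 < p -> 0 < q -> 0 < P -> 0 < Q ->
  (p + q) * ln ((p + q) / (P + Q)) <= p * ln (p / P) + q * ln (q / Q).
Proof.
move=> p0 q0 P0 Q0; set r := (p + q) / (P + Q).
have r0 : 0 < r by rewrite divr_gt0 // addr_gt0.
set u := r * P / p; set v := r * Q / q.
have u0 : 0 < u by rewrite divr_gt0 // mulr_gt0.
have v0 : 0 < v by rewrite divr_gt0 // mulr_gt0.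
have -> : p / P = r / u by rewrite /u; field; rewrite ?gt_eqF.
have -> : q / Q = r / v by rewrite /v; field; rewrite ?gt_eqF.
rewrite ![ln (r / _)]ln_div ?posrE //.
have uv : p * u + q * v = p + q by rewrite /u /v /r; field; rewrite ?gt_eqF ?addr_gt0.
have lu : p * ln u <= p * (u - 1) by apply: ler_wpM2l; [exact: ltW | exact: ln_le_subr1].
have lv : q * ln v <= q * (v - 1) by apply: ler_wpM2l; [exact: ltW | exact: ln_le_subr1].
rewrite mulrDl !mulrBr; move: lu lv; rewrite !mulrBr !mulr1 => lu lv; lra.
Qed.

Lemma xlog_sum_le p q P Q : 0 <= p -> p <= P -> 0 <= q -> q <= Q ->
  xlog (p + q) ((p + q) / (P + Q)) <= xlog p (p / P) + xlog q (q / Q).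
Proof.
move=> p0 pP q0 qQ.
have mono (x X Y : R) : 0 < x -> x <= X -> 0 <= Y ->
    xlog x (x / (X + Y)) <= xlog x (x / X).
  move=> x0 xX Y0; have X0 : 0 < X by apply: lt_le_trans xX.
  rewrite !xlogE ?gt_eqF // ler_pM2l // ler_ln ?posrE ?divr_gt0 ?ltr_wpDr //.
  by rewrite ler_pM2l // lef_pV2 ?posrE ?ltr_wpDr // lerDl.
have [->|pn0] := eqVneq p 0.
  rewrite !add0r xlog0 add0r; have [->|qn0] := eqVneq q 0; first by rewrite !xlog0.
  by rewrite addrC mono // ?lt_def ?qn0 // (le_trans p0).
have [->|qn0] := eqVneq q 0.
  by rewrite !addr0 xlog0 addr0 mono // ?lt_def ?pn0 // (le_trans q0).
have pp : 0 < p by rewrite lt_def pn0.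
have qp : 0 < q by rewrite lt_def qn0.
rewrite !xlogE ?gt_eqF ?addr_gt0 //; apply: log_sum_le => //.
- exact: lt_le_trans pP.
- exact: lt_le_trans qQ.
Qed.

End XLog.

Lemma sum_dffun_prod (R : comPzSemiRingType) (I : finType) (T_ : I -> finType)
    (F : forall i, T_ i -> R) :
  \sum_(f : {dffun forall i, T_ i}) \prod_i F i (f i) = \prod_i \sum_(x : T_ i) F i x.
Proof.
pose P_ i := [ffun x : T_ i => F i x].
transitivity (\sum_(t : fprod T_) \prod_(i in I) P_ i (t i)).
  rewrite (reindex (@dffun_of_fprod I T_)); last exact/onW_bij/dffun_of_fprod_bij.
  by apply: eq_bigr => t _; apply: eq_bigr => i _; rewrite /dffun_of_fprod !ffunE.
rewrite big_fprod; symmetry.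
transitivity (\prod_i \sum_(j | tagged_with T_ i j) untag 0 (P_ i) j).
  apply: eq_bigr => i _; rewrite -(big_tag (fun i x => P_ i x)).
  by apply: eq_bigr => x _; rewrite ffunE.
by rewrite bigA_distr_big_dep.
Qed.

Section JointTransition.
Variables (R : realType) (G : coop_game R).

Lemma jtrans_ge0 (s : Sj G) (a : Aj G) (s' : Sj G) : 0 <= jtrans s a s'.
Proof. by apply: prodr_ge0 => i _; apply: trans_ge0. Qed.

Lemma jtrans_sum1 (s : Sj G) (a : Aj G) : \sum_(s' : Sj G) jtrans s a s' = 1.
Proof.
pose unzip (f : {dffun forall i, (obs G i * loc G i)%type}) : Sj G :=
  ([ffun i => (f i).1], [ffun i => (f i).2]).
pose zip (s : Sj G) : {dffun forall i, (obs G i * loc G i)%type} :=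
  [ffun i => (s.1 i, s.2 i)].
have zipK : cancel zip unzip.
  by case=> o l; congr pair; apply/ffunP => i; rewrite !ffunE.
rewrite (reindex unzip); last first.
  by exists zip => // f _; apply/ffunP => i; rewrite !ffunE -surjective_pairing.
rewrite /jtrans.
under eq_bigr => f _ do under eq_bigr => i _ do rewrite !ffunE -surjective_pairing.
rewrite (sum_dffun_prod (fun i => trans G i (s.1 i, s.2 i) (a i))).
by rewrite big1 // => i _; rewrite trans_sum1.
Qed.

End JointTransition.

Lemma nneseries_le_EFin (R : realType) (u : nat -> R) (b : R) :
  (forall n, 0 <= u n) -> (forall n, \sum_(0 <= i < n) u i <= b) ->
  (\sum_(i <oo) (u i)%:E <= b%:E)%E.
Proof.
move=> u0 ub; apply: lime_le; first by apply: is_cvg_nneseries => n _ _; rewrite lee_fin.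
by apply: nearW => n; rewrite sumEFin lee_fin.
Qed.

Section StoppedChain.
Variables (R : realType) (G : coop_game R) (T : {set Sj G}).
Variable pi : Sj G -> Aj G -> R.
Hypothesis hpi : is_act_policy pi.

Lemma act_policy_ge0 s a : 0 <= pi s a. Proof. exact: (hpi s).1. Qed.
Lemma act_policy_sum1 s : \sum_a pi s a = 1. Proof. exact: (hpi s).2. Qed.

Definition init_dist (s : Sj G) : R := (s == s_init G)%:R.

Definition inflow (m : Sj G -> R) (s : Sj G) : R :=
  \sum_(s' | s' \notin T) \sum_b m s' * pi s' b * jtrans s' b s.

(* Constraint (i) of (OPT) for [x = m pi], with [m] the state marginal. *)
Definition is_flow (m : Sj G -> R) : Prop :=
  forall s, s \notin T -> m s = init_dist s + inflow m s.

Definition out (B : pred (Sj G)) (s : Sj G) : R :=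
  \sum_b pi s b * \sum_(s' | B s') jtrans s b s'.

Lemma alive_ge0 t s : 0 <= alive T pi t s.
Proof.
elim: t s => [|t IH] s /=; first by rewrite ler0n.
apply: sumr_ge0 => s' _; apply: sumr_ge0 => b _.
by rewrite !mulr_ge0 ?jtrans_ge0 ?act_policy_ge0.
Qed.

Definition nuE (s : Sj G) : \bar R := (\sum_(t <oo) (alive T pi t s)%:E)%E.

Lemma nuE_ge0 s : (0 <= nuE s)%E.
Proof. by apply: nneseries_ge0 => n _ _; rewrite lee_fin alive_ge0. Qed.

Lemma nuE_flow s : nuE s = ((init_dist s)%:E + \sum_(s' | s' \notin T) \sum_b
    (pi s' b * jtrans s' b s)%:E * nuE s')%E.
Proof.
have alive0 i : (0 <= (alive T pi i s)%:E)%E by rewrite lee_fin alive_ge0.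
rewrite /nuE nneseries_recl //; congr (_ + _)%E.
rewrite -(@nneseries_addn _ _ 1) //.
under eq_eseriesr => i _ do rewrite addn1 /= -sumEFin.
rewrite nneseries_sum => [|s' j _]; last first.
  by rewrite lee_fin; apply: sumr_ge0 => b _;
    rewrite !mulr_ge0 ?alive_ge0 ?act_policy_ge0 ?jtrans_ge0.
apply: eq_bigr => s' _; under eq_eseriesr => i _ do rewrite -sumEFin.
rewrite nneseries_sum => [|b j _]; last first.
  by rewrite lee_fin !mulr_ge0 ?alive_ge0 ?act_policy_ge0 ?jtrans_ge0.
apply: eq_bigr => b _; rewrite -nneseriesZl => [|i _]; last by rewrite lee_fin alive_ge0.
by apply: eq_eseriesr => i _; rewrite -EFinM; congr (_%:E); ring.
Qed.

Lemma alive_psumS n s : \sum_(0 <= t < n.+1) alive T pi t s =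
  init_dist s + inflow (fun s' => \sum_(0 <= t < n) alive T pi t s') s.
Proof.
rewrite big_nat_recl //; congr (_ + _); rewrite /inflow /= exchange_big.
apply: eq_bigr => s' _; rewrite exchange_big; apply: eq_bigr => b _.
by rewrite !mulr_suml.
Qed.

Lemma nuE_le_flow (m : Sj G -> R) :
  (forall s, s \notin T -> 0 <= m s) -> is_flow m ->
  forall s, s \notin T -> (nuE s <= (m s)%:E)%E.
Proof.
move=> m0 mflow s sT; apply: nneseries_le_EFin => [n|n]; first exact: alive_ge0.
elim: n s sT => [|n IH] s sT; first by rewrite big_geq // m0.
rewrite alive_psumS mflow // lerD2l; apply: ler_sum => s' s'T; apply: ler_sum => b _.
by rewrite ler_wpM2r ?jtrans_ge0 // ler_wpM2r ?act_policy_ge0 // IH.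
Qed.

Definition nu (s : Sj G) : R := fine (nuE s).

Lemma out_ge0 B s : 0 <= out B s.
Proof.
by apply: sumr_ge0 => b _; rewrite mulr_ge0 ?act_policy_ge0 ?sumr_ge0 // => s' _;
  apply: jtrans_ge0.
Qed.

Lemma out_subset (A B : {set Sj G}) s : A \subset B ->
  out (fun s' => s' \in A) s <= out (fun s' => s' \in B) s.
Proof.
move=> AB; apply: ler_sum => b _; apply: ler_wpM2l; first exact: act_policy_ge0.
rewrite big_mkcond [leRHS]big_mkcond; apply: ler_sum => s' _.
case: ifP => [s'A|_]; first by rewrite (fintype.subsetP AB _ s'A).
by case: ifP => // _; exact: jtrans_ge0.
Qed.

Lemma sum_inflow (B : pred (Sj G)) (m : Sj G -> R) :
  \sum_(s | B s) inflow m s = \sum_(s' | s' \notin T) m s' * out B s'.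
Proof.
rewrite exchange_big; apply: eq_bigr => s' _.
rewrite exchange_big /out mulr_sumr; apply: eq_bigr => b _.
by rewrite mulrA mulr_sumr.
Qed.

Lemma target_flowE (tg : {set Sj G}) (y : Sj G -> Aj G -> R) (m : Sj G -> R) :
  (forall s a, s \notin T -> y s a = m s * pi s a) ->
  \sum_(s | s \notin T) \sum_a \sum_(s' in tg) y s a * jtrans s a s' =
  \sum_(s | s \notin T) m s * out (fun s' => s' \in tg) s.
Proof.
move=> ympi; apply: eq_bigr => s sT; rewrite /out mulr_sumr; apply: eq_bigr => a _.
by rewrite ympi // mulrA mulr_sumr.
Qed.

Lemma out_leave s : out (fun s' => s' \in T) s = 1 - out (fun s' => s' \notin T) s.
Proof.
apply/eqP; rewrite eq_sym subr_eq /out -big_split /= -(act_policy_sum1 s).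
apply/eqP/eq_bigr => b _; rewrite -mulrDr; have := jtrans_sum1 s b.
by rewrite (bigID (fun s' => s' \in T)) /= => ->; rewrite mulr1.
Qed.

Lemma inflow_affine k m1 m2 s :
  inflow (fun s' => k * m1 s' + (1 - k) * m2 s') s =
  k * inflow m1 s + (1 - k) * inflow m2 s.
Proof.
rewrite /inflow !mulr_sumr -big_split; apply: eq_bigr => s' _.
by rewrite !mulr_sumr -big_split; apply: eq_bigr => b _ /=; ring.
Qed.

Lemma is_flow_affine k m1 m2 : is_flow m1 -> is_flow m2 ->
  is_flow (fun s => k * m1 s + (1 - k) * m2 s).
Proof. by move=> flow1 flow2 s sT; rewrite inflow_affine flow1 // flow2 //; ring. Qed.

Lemma flow_absorbed m : is_flow m ->
  \sum_(s | s \notin T) m s * out (fun s' => s' \in T) s =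
  \sum_(s | s \notin T) init_dist s.
Proof.
move=> mflow; under eq_bigr do rewrite out_leave mulrBr mulr1.
rewrite sumrB -sum_inflow; apply/eqP; rewrite subr_eq -big_split /=.
by apply/eqP/eq_bigr => s sT; rewrite mflow.
Qed.


Section FiniteOccupancy.
Hypothesis nuE_fin : forall s, s \notin T -> nuE s \is a fin_num.

Lemma nuE_flow_nu s : nuE s = (init_dist s + inflow nu s)%:E.
Proof.
rewrite nuE_flow EFinD -sumEFin; congr (_ + _)%E.
apply: eq_bigr => s' s'T; rewrite -sumEFin; apply: eq_bigr => b _.
by rewrite /nu -[in LHS](fineK (nuE_fin s'T)) -EFinM mulrC mulrA.
Qed.

Lemma nuE_nu s : nuE s = (nu s)%:E.
Proof. by rewrite /nu nuE_flow_nu. Qed.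

Lemma nu_flow s : nu s = init_dist s + inflow nu s.
Proof. by rewrite {1}/nu nuE_flow_nu. Qed.

Lemma nu_is_flow : is_flow nu.
Proof. by move=> s _; apply: nu_flow. Qed.

Lemma nu_ge0 s : 0 <= nu s.
Proof. by rewrite -lee_fin -nuE_nu nuE_ge0. Qed.

Lemma reach_probE (tg : {set Sj G}) : reach_prob T tg pi = (\sum_(s in tg) nu s)%:E.
Proof.
rewrite /reach_prob; under eq_eseriesr => t _ do rewrite -sumEFin.
rewrite nneseries_sum => [|s t _]; last by rewrite lee_fin alive_ge0.
by rewrite -sumEFin; apply: eq_bigr => s _; exact: nuE_nu.
Qed.

Lemma reach_prob_out (tg : {set Sj G}) : reach_prob T tg pi =
  (\sum_(s in tg) init_dist s + \sum_(s | s \notin T) nu s * out (fun s' => s' \in tg) s)%:E.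
Proof.
rewrite reach_probE; under eq_bigr do rewrite nu_flow.
by rewrite big_split /= sum_inflow.
Qed.

End FiniteOccupancy.

Lemma occE s a : occ T pi s a = ((pi s a)%:E * nuE s)%E.
Proof.
rewrite /occ -nneseriesZl => [|i _]; last by rewrite lee_fin alive_ge0.
by apply: eq_eseriesr => i _; rewrite -EFinM mulrC.
Qed.

Lemma nuE_fin_num_occ : (forall s a, s \notin T -> (occ T pi s a < +oo)%E) ->
  forall s, s \notin T -> nuE s \is a fin_num.
Proof.
move=> occ_fin s sT; rewrite ge0_fin_numE ?nuE_ge0 //.
have -> : nuE s = (\sum_a occ T pi s a)%E.
  under eq_bigr do rewrite occE.
  rewrite -ge0_sume_distrl => [|a _]; last by rewrite lee_fin act_policy_ge0.
  by rewrite sumEFin act_policy_sum1 mul1e.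
by apply: lte_sum_pinfty => a _; apply: occ_fin.
Qed.

End StoppedChain.

Section Objective.
Variables (R : realType) (G : coop_game R) (T : {set Sj G}).
Implicit Types (y ya yb ym : Sj G -> Aj G -> R) (c : {set 'I_(nag G)}).

Definition mass y (o : Oj G) : R :=
  \sum_(l : Lj G | (o, l) \notin T) \sum_(a : Aj G) y (o, l) a.

Lemma mass_ge0 y o : (forall s a, s \notin T -> 0 <= y s a) -> 0 <= mass y o.
Proof. by move=> y0; apply: sumr_ge0 => l oT; apply: sumr_ge0 => a _; exact: y0. Qed.

Definition ctrans_xlog c o lc ac : R :=
  \sum_(o1c : {dffun forall i : 'I_(nag G), option (obs G i)} | supp_on c o1c)
  \sum_(l1c : {dffun forall i : 'I_(nag G), option (loc G i)} | supp_on c l1c)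
     xlog (ctrans c o lc ac o1c l1c) (ctrans c o lc ac o1c l1c).

Lemma gtermE y c (W : Oj G -> R) :
  gterm T y c W = - \sum_(o : Oj G)
    \sum_(lc : {dffun forall i : 'I_(nag G), option (loc G i)} | supp_on c lc)
    \sum_(ac : {dffun forall i : 'I_(nag G), option (act G i)} | supp_on c ac)
    (W o * xlog (marg T y c o lc ac) (marg T y c o lc ac /
        \sum_(bc : {dffun forall i : 'I_(nag G), option (act G i)} | supp_on c bc)
           marg T y c o lc bc)
     + marg T y c o lc ac * W o * ctrans_xlog c o lc ac).
Proof.
rewrite /gterm -opprD; congr (- _); rewrite -big_split; apply: eq_bigr => o _.
rewrite -big_split; apply: eq_bigr => lc _; rewrite -big_split; apply: eq_bigr => ac _ /=.
congr (_ + _); first by rewrite [_ * W o]mulrC xlogM.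
rewrite /ctrans_xlog mulr_sumr; apply: eq_bigr => o1c _.
by rewrite mulr_sumr; apply: eq_bigr => l1c _; rewrite xlogM.
Qed.

Lemma marg_ge0 y c o lc ac : (forall s a, s \notin T -> 0 <= y s a) ->
  0 <= marg T y c o lc ac.
Proof.
by move=> y0; apply: sumr_ge0 => l /andP[lT _]; apply: sumr_ge0 => a _; apply: y0.
Qed.

Lemma marg_midpoint ya yb ym c o lc ac :
  (forall s a, s \notin T -> ya s a + yb s a = 2 * ym s a) ->
  marg T ya c o lc ac + marg T yb c o lc ac = 2 * marg T ym c o lc ac.
Proof.
move=> mid; rewrite /marg -big_split mulr_sumr; apply: eq_bigr => l /andP[oT _].
by rewrite -big_split mulr_sumr; apply: eq_bigr => a _; apply: mid.
Qed.

Lemma marg_le_sum y c o lc ac : (forall s a, s \notin T -> 0 <= y s a) ->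
  supp_on c ac ->
  marg T y c o lc ac <=
  \sum_(bc : {dffun forall i : 'I_(nag G), option (act G i)} | supp_on c bc)
     marg T y c o lc bc.
Proof.
by move=> y0 ac_c; rewrite (bigD1 ac) //= lerDl sumr_ge0 // => bc _; apply: marg_ge0.
Qed.

(* Concavity of [g^c] along a segment, from the log-sum inequality; the
   transition part is linear in the marginal. *)
Lemma gterm_midpoint ya yb ym c (W : Oj G -> R) :
  (forall s a, s \notin T -> ya s a + yb s a = 2 * ym s a) ->
  (forall s a, s \notin T -> 0 <= ya s a) ->
  (forall s a, s \notin T -> 0 <= yb s a) ->
  (forall o, 0 <= W o) ->
  gterm T ya c W + gterm T yb c W <= 2 * gterm T ym c W.
Proof.
move=> mid ya0 yb0 W0; rewrite !gtermE mulrN -opprD lerN2 -big_split mulr_sumr.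
apply: ler_sum => o _; rewrite -big_split mulr_sumr; apply: ler_sum => lc _.
rewrite -big_split mulr_sumr; apply: ler_sum => ac ac_c.
set Ma := marg T ya c o lc ac; set Mb := marg T yb c o lc ac.
set Mm := marg T ym c o lc ac.
set Sa := \sum_(bc | _) marg T ya c o lc bc; set Sb := \sum_(bc | _) marg T yb c o lc bc.
set Sm := \sum_(bc | _) marg T ym c o lc bc.
have hM : Ma + Mb = 2 * Mm by apply: marg_midpoint.
have hS : Sa + Sb = 2 * Sm.
  by rewrite -big_split mulr_sumr; apply: eq_bigr => bc _; apply: marg_midpoint.
have ratio : Mm / Sm = (Ma + Mb) / (Sa + Sb).
  by rewrite hM hS invfM mulrACA mulfV ?mul1r ?pnatr_eq0.
have key : 2 * xlog Mm (Mm / Sm) <= xlog Ma (Ma / Sa) + xlog Mb (Mb / Sb).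
  rewrite ratio -xlogM -hM; apply: xlog_sum_le; by [apply: marg_ge0 | apply: marg_le_sum].
rewrite mulrDr /= addrACA; apply: lerD.
  by rewrite mulrCA -mulrDr ler_wpM2l.
by rewrite !mulrA -hM !mulrDl.
Qed.

Definition policy_xlog (pi : Sj G -> Aj G -> R) (s : Sj G) : R :=
  \sum_a (xlog (pi s a) (pi s a) +
          pi s a * \sum_(s' : Sj G) xlog (jtrans s a s') (jtrans s a s')).

Lemma htermE_policy y (m : Sj G -> R) (pi : Sj G -> Aj G -> R) :
  is_act_policy pi -> (forall s a, s \notin T -> y s a = m s * pi s a) ->
  hterm T y = - \sum_(s | s \notin T) m s * policy_xlog pi s.
Proof.
move=> hpi ympi; rewrite /hterm -opprD; congr (- _); rewrite -big_split.
apply: eq_bigr => s sT; rewrite -big_split mulr_sumr; apply: eq_bigr => a _ /=.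
have -> : \sum_b y s b = m s.
  by under eq_bigr do rewrite ympi //; rewrite -mulr_sumr act_policy_sum1 // mulr1.
rewrite ympi // mulrDr; congr (_ + _).
  have [->|m0] := eqVneq (m s) 0; first by rewrite !mul0r xlog0.
  by rewrite mulrAC mulfV // mul1r xlogM.
by rewrite mulrA mulr_sumr; apply: eq_bigr => s' _; rewrite xlogM.
Qed.

Lemma Phi_val_midpoint ya yb ym
    (W1 : Oj G -> 'I_(nag G) -> R) (W2 : Oj G -> Acomm G -> R) :
  (forall s a, s \notin T -> ya s a + yb s a = 2 * ym s a) ->
  (forall s a, s \notin T -> 0 <= ya s a) ->
  (forall s a, s \notin T -> 0 <= yb s a) ->
  (forall o i, 0 <= W1 o i) -> (forall o (k : Acomm G), 0 <= W2 o k) ->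
  hterm T ya + hterm T yb = 2 * hterm T ym ->
  Phi_val T ya W1 W2 + Phi_val T yb W1 W2 <= 2 * Phi_val T ym W1 W2.
Proof.
move=> mid ya0 yb0 W10 W20 hmid; rewrite /Phi_val !mulrDr mulrN -hmid.
rewrite addrACA [X in X + _ <= _]addrACA -opprD -!big_split !mulr_sumr /=.
rewrite -!addrA lerD2l; apply: lerD; apply: ler_sum => i _; exact: gterm_midpoint.
Qed.

Lemma gterm_eq_weight y c (W W' : Oj G -> R) :
  (forall s a, s \notin T -> 0 <= y s a) ->
  (forall o, mass y o != 0 -> W o = W' o) ->
  gterm T y c W = gterm T y c W'.
Proof.
move=> y0 WW'; rewrite !gtermE; congr (- _); apply: eq_bigr => o _.
have [m0|/WW' -> //] := eqVneq (mass y o) 0.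
have y_o0 l a : (o, l) \notin T -> y (o, l) a = 0.
  move=> oT; have suml0 : \sum_b y (o, l) b = 0.
    by apply: (psumr_eq0P _ m0) oT => l' oT'; apply: sumr_ge0 => b _; exact: y0.
  by apply: (psumr_eq0P _ suml0) => // b _; exact: y0.
have marg0 lc ac : marg T y c o lc ac = 0.
  by apply: big1 => l /andP[oT _]; apply: big1 => a _; apply: y_o0.
by apply: eq_bigr => lc _; apply: eq_bigr => ac _; rewrite !marg0 !xlog0 !mulr0 !mul0r.
Qed.

Lemma Phi_val_eq_weight y
    (W1 W1' : Oj G -> 'I_(nag G) -> R) (W2 W2' : Oj G -> Acomm G -> R) :
  (forall s a, s \notin T -> 0 <= y s a) ->
  (forall o, mass y o != 0 -> W1 o =1 W1' o /\ W2 o =1 W2' o) ->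
  Phi_val T y W1 W2 = Phi_val T y W1' W2'.
Proof.
move=> y0 WW'; rewrite /Phi_val; congr (_ + _ + _).
  by apply: eq_bigr => i _; apply: gterm_eq_weight => // o /WW'[->].
by apply: eq_bigr => c _; apply: gterm_eq_weight => // o /WW'[_ ->].
Qed.

End Objective.

Section PolicyForm.
Variables (R : realType) (G : coop_game R) (T : {set Sj G}).
Variable pc : Oj G -> Acomm G -> R.
Hypothesis hpc : is_comm_policy pc.

Definition comm_weight (o : Oj G) (i : 'I_(nag G)) : R :=
  \sum_(c : Acomm G | i \notin val c) pc o c.

Definition Phi_comm (y : Sj G -> Aj G -> R) : R := Phi_val T y comm_weight pc.

Lemma Phi_policy_form (y : Sj G -> Aj G -> R) (x2 : Oj G -> Acomm G -> R) :
  (forall s a, s \notin T -> 0 <= y s a) ->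
  (forall o c, x2 o c = mass T y o * pc o c) -> Phi T y x2 = Phi_comm y.
Proof.
move=> y0 x2E; apply: Phi_val_eq_weight => // o m0.
have sum_x2 : \sum_c x2 o c = mass T y o.
  by under eq_bigr do rewrite x2E; rewrite -mulr_sumr (hpc o).2 mulr1.
rewrite sum_x2; split => [i|c]; last by rewrite x2E mulrC mulKf.
by rewrite /comm_weight; under eq_bigr do rewrite x2E; rewrite -mulr_sumr mulrC mulKf.
Qed.

Lemma Dbar_occupancy (pi : Sj G -> Aj G -> R) : is_act_policy pi ->
  (forall s, s \notin T -> nuE T pi s \is a fin_num) ->
  Dbar T pc pi = Phi_comm (fun s a => nu T pi s * pi s a).
Proof.
move=> hpi nuE_fin; rewrite /Dbar /Phi_comm; congr Phi_val.
by apply/funext => s; apply/funext => a; rewrite occE // nuE_nu // -EFinM mulrC.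
Qed.

Lemma opt_feasible_policy (tg : {set Sj G}) (pi : Sj G -> Aj G -> R) (m : Sj G -> R) :
  is_act_policy pi -> (forall s, s \notin T -> 0 <= m s) -> is_flow T pi m ->
  (vstar T tg <= (\sum_(s | s \notin T) m s * out pi (fun s' => s' \in tg) s)%:E)%E ->
  opt_feasible T tg (fun s a => m s * pi s a)
    (fun o c => mass T (fun s a => m s * pi s a) o * pc o c).
Proof.
move=> hpi m0 mflow vle.
have y0 s a : s \notin T -> 0 <= m s * pi s a.
  by move=> sT; rewrite mulr_ge0 ?m0 ?act_policy_ge0.
split => //.
- by move=> o c; rewrite mulr_ge0 ?mass_ge0 ?(hpc o).1.
- by move=> s sT; rewrite -mulr_sumr act_policy_sum1 // mulr1 addrC mflow.
- by rewrite (@target_flowE _ _ T pi tg _ m).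
- by move=> o; rewrite -mulr_sumr (hpc o).2 mulr1.
Qed.

End PolicyForm.

Section OptimalSolution.
Variables (R : realType) (G : coop_game R) (T Starget : {set Sj G}).
Hypothesis target_sub : Starget \subset T.
Variables (x1 : Sj G -> Aj G -> R) (x2 : Oj G -> Acomm G -> R).
Hypothesis x_opt : opt_optimal T Starget x1 x2.
Variables (pc : Oj G -> Acomm G -> R) (pa : Sj G -> Aj G -> R).
Hypotheses (hpc : is_comm_policy pc) (hpa : is_act_policy pa).
Hypothesis pcE : forall o, \sum_(d : Acomm G) x2 o d != 0 ->
  forall c, pc o c = x2 o c / \sum_(d : Acomm G) x2 o d.
Hypothesis paE : forall s, s \notin T -> \sum_(b : Aj G) x1 s b != 0 ->
  forall a, pa s a = x1 s a / \sum_(b : Aj G) x1 s b.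

Let X (s : Sj G) : R := \sum_a x1 s a.
Let nv : Sj G -> R := nu T pa.
Let out_tg : Sj G -> R := out pa (fun s' => s' \in Starget).

Lemma x1_ge0 s a : s \notin T -> 0 <= x1 s a.
Proof. by case: x_opt => -[ge0 _ _ _ _] _; apply: ge0. Qed.

Lemma x1_policy s a : s \notin T -> x1 s a = X s * pa s a.
Proof.
move=> sT; have [X0|Xn0] := eqVneq (X s) 0; last by rewrite (paE sT Xn0) mulrC divfK.
by rewrite X0 mul0r; apply: (psumr_eq0P _ X0) => // b _; apply: x1_ge0.
Qed.

Lemma x2_policy o c : x2 o c = mass T x1 o * pc o c.
Proof.
case: x_opt => -[_ x2_ge0 _ _ consistent] _; rewrite /mass consistent.
have [S0|Sn0] := eqVneq (\sum_d x2 o d) 0; last by rewrite (pcE Sn0) mulrC divfK.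
by rewrite S0 mul0r; apply: (psumr_eq0P _ S0).
Qed.

Lemma X_flow : is_flow T pa X.
Proof.
case: x_opt => -[_ _ flow _ _] _ s sT; rewrite /X flow // addrC; congr (_ + _).
by apply: eq_bigr => s' s'T; apply: eq_bigr => b _; rewrite x1_policy.
Qed.

Lemma X_ge0 s : s \notin T -> 0 <= X s.
Proof. by move=> sT; apply: sumr_ge0 => a _; apply: x1_ge0. Qed.

Lemma nuE_fin_opt s : s \notin T -> nuE T pa s \is a fin_num.
Proof.
move=> sT; rewrite ge0_fin_numE ?nuE_ge0 //.
exact: le_lt_trans (nuE_le_flow hpa X_ge0 X_flow sT) (ltry _).
Qed.

Lemma nu_le_X s : s \notin T -> nv s <= X s.
Proof.
move=> sT; rewrite -lee_fin /nv -(nuE_nu hpa nuE_fin_opt).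
exact (nuE_le_flow hpa X_ge0 X_flow sT).
Qed.

(* Both [X] and [nv] are flows, so the surplus [X - nv >= 0] is never absorbed. *)
Lemma target_flow_X :
  \sum_(s | s \notin T) X s * out_tg s = \sum_(s | s \notin T) nv s * out_tg s.
Proof.
have absorbed0 : \sum_(s | s \notin T) (X s - nv s) * out pa (fun s' => s' \in T) s = 0.
  under eq_bigr do rewrite mulrBl.
  rewrite sumrB (flow_absorbed hpa X_flow).
  by rewrite (flow_absorbed hpa (nu_is_flow hpa nuE_fin_opt)) subrr.
apply/eqP; rewrite -subr_eq0 -sumrB; apply/eqP/big1 => s sT; rewrite -mulrBl.
have surplus0 : 0 <= X s - nv s by rewrite subr_ge0 nu_le_X.
apply/eqP; rewrite eq_le mulr_ge0 ?out_ge0 // andbT.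
rewrite -((psumr_eq0P _ absorbed0) s sT) => [|s' s'T]; last first.
  by rewrite mulr_ge0 ?subr_ge0 ?nu_le_X ?out_ge0.
by rewrite ler_wpM2l ?out_subset.
Qed.

Lemma vstar_le_target_flow :
  (vstar T Starget <= (\sum_(s | s \notin T) nv s * out_tg s)%:E)%E.
Proof.
case: x_opt => -[_ _ _ reach _] _.
by rewrite -target_flow_X -(target_flowE _ x1_policy).
Qed.

Lemma init_target0 : \sum_(s in Starget) init_dist s = 0.
Proof.
apply/eqP; rewrite eq_le sumr_ge0 ?andbT => [|s _]; last by rewrite ler0n.
have : (reach_prob T Starget pa <= vstar T Starget)%E by apply: ereal_sup_ubound; exists pa.
move/le_trans/(_ vstar_le_target_flow); rewrite (reach_prob_out hpa nuE_fin_opt) lee_fin.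
by rewrite -/nv -/out_tg gerDr.
Qed.

Lemma reach_prob_opt : reach_prob T Starget pa = vstar T Starget.
Proof.
apply/eqP; rewrite eq_le ereal_sup_ubound /=; last by exists pa.
by rewrite (reach_prob_out hpa nuE_fin_opt) init_target0 add0r vstar_le_target_flow.
Qed.

Lemma Phi_opt : Phi T x1 x2 = Phi_comm T pc x1.
Proof. by apply: Phi_policy_form => //; [apply: x1_ge0 | apply: x2_policy]. Qed.

(* Occupancy measures of policies achieving [v*] are feasible for (OPT). *)
Lemma opt_le_Dbar (pc' : Oj G -> Acomm G -> R) (pa' : Sj G -> Aj G -> R) :
  is_comm_policy pc' -> is_act_policy pa' ->
  reach_prob T Starget pa' = vstar T Starget ->
  (forall s a, s \notin T -> (occ T pa' s a < +oo)%E) ->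
  Phi T x1 x2 <= Dbar T pc' pa'.
Proof.
move=> hpc' hpa' reach' occ_fin; have fin' := nuE_fin_num_occ hpa' occ_fin.
pose y s a := nu T pa' s * pa' s a.
have y_ge0 s a : s \notin T -> 0 <= y s a.
  by move=> _; rewrite mulr_ge0 ?nu_ge0 ?act_policy_ge0.
rewrite (Dbar_occupancy _ hpa' fin').
rewrite -(Phi_policy_form hpc' y_ge0 (x2 := fun o c => mass T y o * pc' o c)) //.
apply: x_opt.2.
apply: (opt_feasible_policy hpc' hpa' (fun s _ => nu_ge0 hpa' fin' s) (nu_is_flow hpa' fin')).
by rewrite -reach' (reach_prob_out hpa' fin') init_target0 add0r.
Qed.

(* The reflection of [nv] through [X]: again a nonnegative flow with the same
   target flow, and [x1] is the midpoint of it and of the occupancy of [pa]. *)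
Let m (s : Sj G) : R := 2 * X s + (1 - 2) * nv s.

Lemma reflected_ge0 s : s \notin T -> 0 <= m s.
Proof.
move=> sT; have := nu_le_X sT; have := nu_ge0 hpa nuE_fin_opt s; have := X_ge0 sT.
by rewrite /m; lra.
Qed.

Lemma Phi_opt_le_reflected : Phi T x1 x2 <= Phi_comm T pc (fun s a => m s * pa s a).
Proof.
have target_m :
    \sum_(s | s \notin T) m s * out_tg s = \sum_(s | s \notin T) nv s * out_tg s.
  rewrite /m; under eq_bigr do rewrite mulrDl -!mulrA.
  by rewrite big_split /= -!mulr_sumr target_flow_X; ring.
have m_flow := is_flow_affine 2 X_flow (nu_is_flow hpa nuE_fin_opt).
pose y s a := m s * pa s a.
have y_ge0 s a : s \notin T -> 0 <= y s a.
  by move=> sT; rewrite mulr_ge0 ?reflected_ge0 ?act_policy_ge0.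
rewrite -(Phi_policy_form hpc y_ge0 (x2 := fun o c => mass T y o * pc o c)) //.
apply: x_opt.2; apply: (opt_feasible_policy hpc hpa reflected_ge0 m_flow).
by rewrite target_m vstar_le_target_flow.
Qed.

Lemma Dbar_le_opt : Dbar T pc pa <= Phi T x1 x2.
Proof.
have midpoint s a : s \notin T -> nv s * pa s a + m s * pa s a = 2 * x1 s a.
  by move=> sT; rewrite x1_policy // /m; ring.
have nv_pa_ge0 s a : s \notin T -> 0 <= nv s * pa s a.
  by move=> _; rewrite mulr_ge0 ?(nu_ge0 hpa nuE_fin_opt) ?act_policy_ge0.
have m_pa_ge0 s a : s \notin T -> 0 <= m s * pa s a.
  by move=> sT; rewrite mulr_ge0 ?reflected_ge0 ?act_policy_ge0.
have W1_ge0 o i : 0 <= comm_weight pc o i by apply: sumr_ge0 => c _; apply: (hpc o).1.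
have h_mid :
    hterm T (fun s a => nv s * pa s a) + hterm T (fun s a => m s * pa s a) = 2 * hterm T x1.
  rewrite (htermE_policy hpa (m := nv) (fun _ _ _ => erefl)).
  rewrite (htermE_policy hpa (m := m) (fun _ _ _ => erefl)) (htermE_policy hpa x1_policy).
  rewrite mulrN -opprD mulr_sumr -big_split; congr (- _); apply: eq_bigr => s _ /=.
  by rewrite /m; ring.
have := Phi_val_midpoint midpoint nv_pa_ge0 m_pa_ge0 W1_ge0 (fun o => (hpc o).1) h_mid.
have := Phi_opt_le_reflected; rewrite Phi_opt (Dbar_occupancy _ hpa nuE_fin_opt) /Phi_comm.
lra.
Qed.

End OptimalSolution.

Theorem theorem2 (R : realType) (G : coop_game R)
  (Starget Savoid : {set Sj G})
  (x1 : Sj G -> Aj G -> R) (x2 : Oj G -> Acomm G -> R)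
  (pc : Oj G -> Acomm G -> R) (pa : Sj G -> Aj G -> R) :
  [disjoint Starget & Savoid] ->
  opt_optimal (Starget :|: Savoid) Starget x1 x2 ->
  is_comm_policy pc ->
  is_act_policy pa ->
  (forall o, \sum_(d : Acomm G) x2 o d != 0 ->
     forall c, pc o c = x2 o c / \sum_(d : Acomm G) x2 o d) ->
  (forall s, s \notin Starget :|: Savoid -> \sum_(b : Aj G) x1 s b != 0 ->
     forall a, pa s a = x1 s a / \sum_(b : Aj G) x1 s b) ->
  reach_prob (Starget :|: Savoid) Starget pa = vstar (Starget :|: Savoid) Starget /\
  (forall (pc' : Oj G -> Acomm G -> R) (pa' : Sj G -> Aj G -> R),
     is_comm_policy pc' -> is_act_policy pa' ->
     reach_prob (Starget :|: Savoid) Starget pa' = vstar (Starget :|: Savoid) Starget ->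
     (forall s a, s \notin Starget :|: Savoid ->
        (occ (Starget :|: Savoid) pa' s a < +oo)%E) ->
     Dbar (Starget :|: Savoid) pc pa <= Dbar (Starget :|: Savoid) pc' pa').
Proof.
move=> _ x_opt hpc hpa pcE paE.
have target_sub : Starget \subset Starget :|: Savoid by apply: finset.subsetUl.
split=> [|pc' pa' hpc' hpa' reach' occ_fin].
  exact (reach_prob_opt target_sub x_opt hpa paE).
apply: le_trans (Dbar_le_opt target_sub x_opt hpc hpa pcE paE) _.
exact (opt_le_Dbar target_sub x_opt hpa paE hpc' hpa' reach' occ_fin).
Qed.
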